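(* Let $P$ be a binary matrix that contains none of $Q_1,Q_2,Q_3,Q_4$ as an interval minor. Then (1) $P$ avoids $D_2$, or (2) $P$ avoids $\overline{D}_2$, or (3) $P$ can be covered by three lines.
   Context: Rows are numbered top to bottom, columns left to right; $(i,j)$ is the entry in row $i$, column $j$; $\mathrm{supp}$ is the set of 1-entries; $(a,b]=\{a+1,\dots,b\}$. A pattern $P\in\{0,1\}^{k\times\ell}$ is an interval minor of $M\in\{0,1\}^{m\times n}$ if there are integers $0=r_0<\dots<r_k=m$ and $0=c_0<\dots<c_\ell=n$ such that for each 1-entry $(i,j)$ of $P$ the submatrix of $M$ on rows $(r_{i-1},r_i]$ and columns $(c_{j-1},c_j]$ contains a 1-entry; otherwise $M$ avoids $P$. $Q_1,\dots,Q_4\in\{0,1\}^{3\times3}$ have supports $\{(1,2),(2,1),(3,3)\}$, $\{(1,2),(2,3),(3,1)\}$, $\{(1,1),(2,3),(3,2)\}$, $\{(1,3),(2,1),(3,2)\}$. $D_2\in\{0,1\}^{2\times 2}$ has support $\{(1,1),(2,2)\}$ and $\overline D_2$ has support $\{(1,2),(2,1)\}$. A line is a row or a column; $M$ can be covered by $t$ lines if there are $t$ lines such that every 1-entry of $M$ lies on one of them. *)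

From mathcomp Require Import all_boot all_algebra.
Set Implicit Arguments. Unset Strict Implicit. Unset Printing Implicit Defensive.

(* Binary matrices: 'M[bool]_(m, n); entry A i j = true means a 1-entry.
   Indices are 0-based: paper's row i is ordinal i-1. *)

(* Interval minor: integers 0 = r_0 < ... < r_k = m and 0 = c_0 < ... < c_l = n
   such that each 1-entry (i,j) of P has a 1-entry of M in rows (r_i, r_{i+1}]
   and columns (c_j, c_{j+1}] (0-based: rows x with r_i <= x < r_{i+1}). *)
Definition interval_minor (k l m n : nat) (P : 'M[bool]_(k, l)) (M : 'M[bool]_(m, n)) : Prop :=
  exists (r c : nat -> nat),
    [/\ r 0 = 0, r k = m & (forall i, i < k -> r i < r i.+1)] /\
    [/\ c 0 = 0, c l = n & (forall j, j < l -> c j < c j.+1)] /\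
        forall (i : 'I_k) (j : 'I_l), P i j ->
          exists (x : 'I_m) (y : 'I_n),
            [/\ r i <= x < r i.+1, c j <= y < c j.+1 & M x y].

Definition avoids (k l m n : nat) (P : 'M[bool]_(k, l)) (M : 'M[bool]_(m, n)) : Prop :=
  ~ interval_minor P M.

Definition pattern (k l : nat) (s : seq (nat * nat)) : 'M[bool]_(k, l) :=
  \matrix_(i < k, j < l) ((i.+1, j.+1) \in s).

Definition Q1 : 'M[bool]_(3, 3) := pattern 3 3 [:: (1,2); (2,1); (3,3)].
Definition Q2 : 'M[bool]_(3, 3) := pattern 3 3 [:: (1,2); (2,3); (3,1)].
Definition Q3 : 'M[bool]_(3, 3) := pattern 3 3 [:: (1,1); (2,3); (3,2)].
Definition Q4 : 'M[bool]_(3, 3) := pattern 3 3 [:: (1,3); (2,1); (3,2)].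
Definition D2 : 'M[bool]_(2, 2) := pattern 2 2 [:: (1,1); (2,2)].
Definition D2bar : 'M[bool]_(2, 2) := pattern 2 2 [:: (1,2); (2,1)].

Definition covered_by_lines (m n : nat) (M : 'M[bool]_(m, n)) (t : nat) : Prop :=
  exists (R : {set 'I_m}) (C : {set 'I_n}),
    #|R| + #|C| <= t /\ forall i j, M i j -> (i \in R) || (j \in C).

From mathcomp Require Import all_boot all_algebra.
From mathcomp Require Import zify.
From Stdlib Require Import Classical.
Set Implicit Arguments. Unset Strict Implicit. Unset Printing Implicit Defensive.
Import GRing.Theory Num.Theory.

(* Avoiding Q1, ..., Q4 means that any three independent 1-entries (in
   distinct rows and columns), read from top to bottom, have monotone column
   indices.  Hence any four independent 1-entries form a monotone chain;
   mirroring the columns, which swaps D2 and D2bar, we may assume it increasing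
   and take an occurrence (c, d) of D2bar.  A chain entry independent of c is
   concordant with c, because c is also independent of some other chain entry;
   likewise for d; and no chain entry is independent of both c and d, as it
   would form a non-monotone triple with them.  This confines the chain to two
   L-shaped hooks, each holding at most one entry of a chain.  So there are no
   four independent 1-entries, and Konig's theorem covers P by three lines. *)

Section Matching.
Variables I J : finType.
Implicit Types (E : I -> J -> bool) (A X Y : {set I}) (B : {set J}).

Definition nbh E X : {set J} := [set j | [exists i in X, E i j]].

Definition hall_condition E A := forall X, X \subset A -> #|X| <= #|nbh E X|.

Definition matching E A (f : I -> option J) :=
  {in A &, injective f} /\ {in A, forall i, exists2 j, f i = Some j & E i j}.

Definition restrict E B i j := E i j && (j \in B).

Lemma nbhP E X j : reflect (exists2 i, i \in X & E i j) (j \in nbh E X).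
Proof. by rewrite inE; apply: (iffP exists_inP) => -[i]; exists i. Qed.

Lemma nbh0 E : nbh E set0 = set0.
Proof. by apply/setP=> j; rewrite in_set0; apply/negbTE/nbhP=> -[i]; rewrite inE. Qed.

Lemma nbhU E X Y : nbh E (X :|: Y) = nbh E X :|: nbh E Y.
Proof.
apply/setP=> j; rewrite in_setU; apply/nbhP/orP => [[i]|].
  by case/setUP => iX Eij; [left|right]; apply/nbhP; exists i.
by case=> /nbhP[i iXY Eij]; exists i; rewrite // in_setU iXY ?orbT.
Qed.

Lemma nbh_restrict E B X : nbh (restrict E B) X = nbh E X :&: B.
Proof.
apply/setP=> j; rewrite in_setI.
apply/nbhP/andP => [[i iX /andP[Eij jB]]|[/nbhP[i iX Eij] jB]].
  by split=> //; apply/nbhP; exists i.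
by exists i; rewrite // /restrict Eij.
Qed.

Lemma matching_nbh E X f : matching E X f -> matching (restrict E (nbh E X)) X f.
Proof.
case=> injf Ef; split=> // i iX; have [j fij Eij] := Ef i iX.
by exists j; rewrite // /restrict Eij; apply/nbhP; exists i.
Qed.

Lemma matching_glue E B A1 A2 f1 f2 :
  matching (restrict E B) A1 f1 -> matching (restrict E (~: B)) A2 f2 ->
  matching E (A1 :|: A2) (fun i => if i \in A1 then f1 i else f2 i).
Proof.
move=> [inj1 E1] [inj2 E2].
have A2_of i : i \in A1 :|: A2 -> i \notin A1 -> i \in A2 by case/setUP=> ->.
have sep i i' : i \in A1 -> i' \in A2 -> f1 i != f2 i'.
  move=> iA1 i'A2; have [j -> /andP[_ jB]] := E1 i iA1.
  by have [j' -> /andP[_]] := E2 i' i'A2; rewrite inE; apply: contraNneq => -[<-].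
split=> [i i' iA i'A /=|i iA /=].
  case: ifPn => iA1; case: ifPn => i'A1.
  - exact: inj1.
  - by move/eqP; rewrite (negPf (sep _ _ iA1 (A2_of _ i'A i'A1))).
  - by move/esym/eqP; rewrite (negPf (sep _ _ i'A1 (A2_of _ iA iA1))).
  - exact: inj2 (A2_of _ iA iA1) (A2_of _ i'A i'A1).
case: ifPn => iA1.
  by have [j fij /andP[Eij _]] := E1 i iA1; exists j.
by have [j fij /andP[Eij _]] := E2 i (A2_of _ iA iA1); exists j.
Qed.

Lemma hall_condition_tight E A X : hall_condition E A -> X \subset A ->
  #|nbh E X| <= #|X| -> hall_condition (restrict E (~: nbh E X)) (A :\: X).
Proof.
move=> hallA sXA tightX Y sYAX.
have sYA : Y \subset A := subset_trans sYAX (subsetDl A X).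
have YX0 : Y :&: X = set0.
  apply/setP=> i; rewrite !inE; apply/negbTE/andP=> -[iY iX].
  by have := subsetP sYAX i iY; rewrite inE iX.
have := hallA (Y :|: X); rewrite subUset sYA sXA nbhU !cardsU YX0 cards0 => /(_ isT).
rewrite nbh_restrict -setDE.
have := cardsID (nbh E X) (nbh E Y); have := subset_leq_card (subsetIr (nbh E Y) (nbh E X)).
lia.
Qed.

Lemma hall_condition_surplus E A i0 j0 : i0 \in A ->
  (forall Y, Y \subset A -> Y != set0 -> Y != A -> #|Y| < #|nbh E Y|) ->
  hall_condition (restrict E (~: [set j0])) (A :\ i0).
Proof.
move=> i0A surplus Y sYA; rewrite nbh_restrict -setDE.
have [->|nY0] := eqVneq Y set0; first by rewrite cards0.
have nYA : Y != A.
  by apply: contraTneq i0A => <-; apply/negP=> /(subsetP sYA); rewrite !inE eqxx.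
have := surplus Y (subset_trans sYA (subsetDl _ _)) nY0 nYA.
by have := cardsD1 j0 (nbh E Y); lia.
Qed.

Theorem hall E A : hall_condition E A -> exists f, matching E A f.
Proof.
elim: {A}_.+1 {-2}A (ltnSn #|A|) E => // N IH A ltAN E hallA.
have [->|[i0 i0A]] := set_0Vmem A; first by exists (fun=> None); split=> i; rewrite inE.
case: (boolP [exists X : {set I}, [&& X \subset A, X != set0, X != A & #|nbh E X| <= #|X|]]).
  case/existsP=> X /and4P[sXA nX0 nXA tightX].
  have [f1 mf1] : exists f1, matching E X f1.
    apply: IH (fun Y sYX => hallA Y (subset_trans sYX sXA)).
    have ltXA : #|X| < #|A| by rewrite proper_card // properEneq nXA.
    exact: leq_trans ltXA ltAN.
  have [f2 mf2] : exists f2, matching (restrict E (~: nbh E X)) (A :\: X) f2.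
    apply: IH (hall_condition_tight hallA sXA tightX).
    have := subset_leq_card sXA; move: nX0 ltAN; rewrite cardsDS // -card_gt0; lia.
  exists (fun i => if i \in X then f1 i else f2 i).
  have -> : A = X :|: A :\: X.
    by apply/setP=> i; rewrite !inE; case: (boolP (i \in X)) => // /(subsetP sXA).
  exact: matching_glue (matching_nbh mf1) mf2.
rewrite negb_exists => /forallP loose.
have surplus Y : Y \subset A -> Y != set0 -> Y != A -> #|Y| < #|nbh E Y|.
  by move=> sYA nY0 nYA; have := loose Y; rewrite sYA nY0 nYA ltnNge.
have [j0 Ei0j0] : exists j0, E i0 j0.
  have := hallA [set i0]; rewrite sub1set i0A cards1 card_gt0 => /(_ isT) /set0Pn[j0].
  by case/nbhP=> i; rewrite inE => /eqP->; exists j0.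
have [f2 mf2] : exists f2, matching (restrict E (~: [set j0])) (A :\ i0) f2.
  apply: IH (hall_condition_surplus j0 i0A surplus).
  by move: ltAN; rewrite (cardsD1 i0 A) i0A; lia.
exists (fun i => if i \in [set i0] then Some j0 else f2 i); rewrite -(setD1K i0A).
apply: matching_glue mf2; split=> [i i'|i]; rewrite !inE => /eqP->.
  by move=> /eqP->.
by exists j0 => //; rewrite /restrict Ei0j0 set11.
Qed.

End Matching.

Lemma hall_deficiency (I J : finType) (E : I -> J -> bool) d :
  (forall X : {set I}, #|X| <= #|nbh E X| + d) ->
  exists R f, matching E R f /\ #|~: R| <= d.
Proof.
move=> hallE; pose E' i (j : J + 'I_d) := if j is inl j then E i j else true.
have [f [injf Ef]] : exists f, matching E' [set: I] f.
  apply: hall => X _; have [->|[i iX]] := set_0Vmem X; first by rewrite cards0.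
  have sub : (inl @: nbh E X) :|: (inr @: [set: 'I_d]) \subset nbh E' X.
    apply/subsetP=> _ /setUP[] /imsetP[j jN ->]; apply/nbhP; last by exists i.
    by case/nbhP: jN => i' i'X Ei'j; exists i'.
  have disj : inl @: nbh E X :&: inr @: [set: 'I_d] = set0.
    by apply/setP=> j; rewrite !inE; apply/negbTE/andP=> -[/imsetP[? _ ->] /imsetP[]].
  apply: leq_trans (subset_leq_card sub).
  rewrite cardsU disj cards0 subn0 !card_imset; [|by move=> ? ? []|by move=> ? ? []].
  by rewrite cardsT card_ord.
pose g i := if f i is Some (inl j) then Some j else None.
exists [set i | g i != None], g; split.
  split=> [i i' |i]; rewrite !inE /g.
    move=> Ri Ri' gii'; apply: injf; rewrite ?inE //.
    by move: Ri Ri' gii'; case: (f i) => [[]|] //; case: (f i') => [[]|] // ? ? _ _ [->].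
  by case: (Ef i (in_setT i)) => -[j|x] -> // Eij _; exists j.
have sub : f @: (~: [set i | g i != None]) \subset [set Some (@inr J _ x) | x in [set: 'I_d]].
  apply/subsetP=> y /imsetP[i]; rewrite !inE /g negbK => iR0 ->{y}.
  have [[j|x] fi _] := Ef i (in_setT i); first by rewrite fi in iR0.
  by rewrite fi; apply/imsetP; exists x.
rewrite -(card_in_imset (f := f)); last by move=> ? ? _ _; apply: injf; rewrite inE.
apply: leq_trans (subset_leq_card sub) _.
by rewrite (leq_trans (leq_imset_card _ _)) // cardsT card_ord.
Qed.

Theorem konig (I J : finType) (E : I -> J -> bool) k :
  (forall A f, matching E A f -> #|A| <= k) ->
  exists (R : {set I}) (C : {set J}),
    #|R| + #|C| <= k /\ forall i j, E i j -> (i \in R) || (j \in C).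
Proof.
move=> small; pose cover X := #|~: X| + #|nbh E X|.
case: (@arg_minnP _ set0 predT cover isT) => X0 _ minX0.
have surplusX0 : #|nbh E X0| <= #|X0|.
  have := minX0 set0 isT; have := cardsC X0; have := cardsC (set0 : {set I}).
  by rewrite /cover nbh0 !cards0; lia.
have [|R [f [/small cardR cardCR]]] := @hall_deficiency I J E (#|X0| - #|nbh E X0|).
  by move=> X; have := minX0 X isT; have := cardsC X; have := cardsC X0; rewrite /cover; lia.
exists (~: X0), (nbh E X0); split; first by have := cardsC R; have := cardsC X0; lia.
move=> i j Eij; rewrite inE; case: (boolP (i \in X0)) => //= iX0.
by apply/nbhP; exists i.
Qed.

(* Integer coordinates let the column reflection [mirror] be defined without bounds. *)
Local Notation point := (int * int)%type.

Section Points.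
Local Open Scope ring_scope.

Definition independent (p q : point) := (p.1 != q.1) && (p.2 != q.2).

Definition concordant (p q : point) :=
  (p.1 < q.1) && (p.2 < q.2) || (q.1 < p.1) && (q.2 < p.2).

Definition monotone_triples (S : point -> Prop) :=
  forall p q r, S p -> S q -> S r -> p.1 < q.1 < r.1 ->
    [&& p.2 != q.2, p.2 != r.2 & q.2 != r.2] ->
    (p.2 < q.2 < r.2) || (r.2 < q.2 < p.2).

(* The union of two L-shaped hooks, with corners (c.1, d.2) and (d.1, c.2);
   no two points of the same hook are concordant. *)
Definition hooks (c d p : point) :=
  [|| (p.1 == c.1) && (p.2 <= d.2), (p.2 == d.2) && (p.1 <= c.1),
      (p.1 == d.1) && (c.2 <= p.2) | (p.2 == c.2) && (d.1 <= p.1)].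

Lemma independentC p q : independent p q = independent q p.
Proof. by rewrite /independent eq_sym [q.2 == _]eq_sym. Qed.

Lemma concordantC p q : concordant p q = concordant q p.
Proof. by rewrite /concordant orbC. Qed.

Lemma independent_of_concordant p q : concordant p q -> independent p q.
Proof. by case: p q => [x y] [x' y']; rewrite /concordant /independent /=; lia. Qed.

Lemma independent_one_of_three q r1 r2 r3 :
  independent r1 r2 -> independent r1 r3 -> independent r2 r3 ->
  [|| independent q r1, independent q r2 | independent q r3].
Proof. by rewrite /independent; lia. Qed.

Lemma concordant_triple S p q r : monotone_triples S -> S p -> S q -> S r ->
  independent p q -> independent p r -> independent q r ->
  concordant p q -> concordant p r.
Proof.
move=> mS Sp Sq Sr; rewrite /independent /concordant => ipq ipr iqr.
have [o|[o|[o|[o|[o|o]]]]] : p.1 < q.1 < r.1 \/ p.1 < r.1 < q.1 \/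
    q.1 < p.1 < r.1 \/ q.1 < r.1 < p.1 \/ r.1 < p.1 < q.1 \/ r.1 < q.1 < p.1 by lia.
- by have := mS _ _ _ Sp Sq Sr o; lia.
- by have := mS _ _ _ Sp Sr Sq o; lia.
- by have := mS _ _ _ Sq Sp Sr o; lia.
- by have := mS _ _ _ Sq Sr Sp o; lia.
- by have := mS _ _ _ Sr Sp Sq o; lia.
- by have := mS _ _ _ Sr Sq Sp o; lia.
Qed.

Lemma hooks_of_dependent c d p : c.1 < d.1 -> d.2 < c.2 ->
  ~~ (independent c p && independent d p) ->
  (independent c p -> concordant c p) -> (independent d p -> concordant d p) ->
  hooks c d p.
Proof.
case: c d p => [c1 c2] [d1 d2] [p1 p2].
by rewrite /independent /concordant /hooks /=; lia.
Qed.

Lemma hooks_no_concordant_triple c d p1 p2 p3 :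
  hooks c d p1 -> hooks c d p2 -> hooks c d p3 ->
  ~~ [&& concordant p1 p2, concordant p1 p3 & concordant p2 p3].
Proof.
case: c d p1 p2 p3 => [c1 c2] [d1 d2] [x1 y1] [x2 y2] [x3 y3].
by rewrite /hooks /concordant /=; lia.
Qed.

Section MonotoneTriples.
Variable S : point -> Prop.
Hypothesis mS : monotone_triples S.

Lemma concordant_of_independent q p r1 r2 r3 : S q -> S p -> S r1 -> S r2 -> S r3 ->
  pairwise concordant [:: p; r1; r2; r3] -> independent q p -> concordant q p.
Proof.
move=> Sq Sp S1 S2 S3 /and4P[/and4P[c1 c2 c3 _] /and3P[c12 c13 _] /andP[c23 _] _] iqp.
have via r : S r -> concordant p r -> independent q r -> concordant q p.
  move=> Sr cpr iqr; rewrite concordantC.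
  apply: (concordant_triple mS Sp Sr Sq (independent_of_concordant cpr));
    by rewrite // independentC.
have /or3P[] := independent_one_of_three q (independent_of_concordant c12)
  (independent_of_concordant c13) (independent_of_concordant c23).
- exact: via.
- exact: via.
- exact: via.
Qed.

Lemma hooks_of_chain c d p r1 r2 r3 : S c -> S d -> c.1 < d.1 -> d.2 < c.2 ->
  S p -> S r1 -> S r2 -> S r3 -> pairwise concordant [:: p; r1; r2; r3] ->
  hooks c d p.
Proof.
move=> Sc Sd cd dc Sp S1 S2 S3 chain.
have cc := concordant_of_independent Sc Sp S1 S2 S3 chain.
have dd := concordant_of_independent Sd Sp S1 S2 S3 chain.
apply: hooks_of_dependent => //; apply/andP=> -[icp idp].
have icd : independent c d by rewrite /independent; apply/andP; split; lia.
have := concordant_triple mS Sc Sp Sd icp icd.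
by rewrite independentC => /(_ idp (cc icp)); rewrite /concordant; lia.
Qed.

Lemma concordant_quadruple p1 p2 p3 p4 : S p1 -> S p2 -> S p3 -> S p4 ->
  pairwise independent [:: p1; p2; p3; p4] -> concordant p1 p2 ->
  pairwise concordant [:: p1; p2; p3; p4].
Proof.
move=> S1 S2 S3 S4 /and4P[/and4P[i12 i13 i14 _] /and3P[i23 i24 _] /andP[i34 _] _] c12.
have i21 : independent p2 p1 by rewrite independentC.
have i31 : independent p3 p1 by rewrite independentC.
have c21 : concordant p2 p1 by rewrite concordantC.
have c13 := concordant_triple mS S1 S2 S3 i12 i13 i23 c12.
have c31 : concordant p3 p1 by rewrite concordantC.
have c14 := concordant_triple mS S1 S2 S4 i12 i14 i24 c12.
have c23 := concordant_triple mS S2 S1 S3 i21 i23 i13 c21.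
have c24 := concordant_triple mS S2 S1 S4 i21 i24 i14 c21.
have c34 := concordant_triple mS S3 S1 S4 i31 i34 i14 c31.
by rewrite /= c12 c13 c14 c23 c24 c34.
Qed.

Lemma no_concordant_quadruple c d p1 p2 p3 p4 :
  S c -> S d -> c.1 < d.1 -> d.2 < c.2 -> S p1 -> S p2 -> S p3 -> S p4 ->
  ~~ pairwise concordant [:: p1; p2; p3; p4].
Proof.
move=> Sc Sd cd dc S1 S2 S3 S4; apply/negP => chain.
have /and4P[/and4P[c12 c13 c14 _] /and3P[c23 c24 _] /andP[c34 _] _] := chain.
have chain2 : pairwise concordant [:: p2; p1; p3; p4].
  by rewrite /= (concordantC p2) c12 c23 c24 c13 c14 c34.
have chain3 : pairwise concordant [:: p3; p1; p2; p4].
  by rewrite /= (concordantC p3) (concordantC p3) c13 c23 c34 c12 c14 c24.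
have hook := hooks_of_chain Sc Sd cd dc.
apply/negP: (hooks_no_concordant_triple (hook _ _ _ _ S1 S2 S3 S4 chain)
  (hook _ _ _ _ S2 S1 S3 S4 chain2) (hook _ _ _ _ S3 S1 S2 S4 chain3)).
by rewrite c12 c13 c23.
Qed.

End MonotoneTriples.

Definition mirror (p : point) : point := (p.1, - p.2).

Lemma mirrorK : involutive mirror.
Proof. by case=> x y; rewrite /mirror opprK. Qed.

Lemma monotone_triples_mirror S : monotone_triples S -> monotone_triples (S \o mirror).
Proof. by move=> mS p q r Sp Sq Sr; have := mS _ _ _ Sp Sq Sr; rewrite /=; lia. Qed.

Lemma independent_mirror p q : independent (mirror p) (mirror q) = independent p q.
Proof. by rewrite /independent /=; lia. Qed.

Lemma concordant_mirror p q : independent p q ->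
  concordant (mirror p) (mirror q) = ~~ concordant p q.
Proof. by rewrite /independent /concordant /=; lia. Qed.

Lemma no_independent_quadruple S a b c d p1 p2 p3 p4 : monotone_triples S ->
  S a -> S b -> a.1 < b.1 -> a.2 < b.2 -> S c -> S d -> c.1 < d.1 -> d.2 < c.2 ->
  S p1 -> S p2 -> S p3 -> S p4 -> ~~ pairwise independent [:: p1; p2; p3; p4].
Proof.
wlog c12 : S a b c d p1 p2 p3 p4 / concordant p1 p2.
  move=> wlog mS Sa Sb ab1 ab2 Sc Sd cd1 cd2 S1 S2 S3 S4.
  have [c12|nc12] := boolP (concordant p1 p2); first exact: (wlog S a b c d p1 p2 p3 p4).
  apply/negP=> ind; have /and4P[/and4P[i12 _ _ _] _ _ _] := ind; apply/negP: ind.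
  have -> : pairwise independent [:: p1; p2; p3; p4] =
            pairwise independent [:: mirror p1; mirror p2; mirror p3; mirror p4].
    by rewrite /= !independent_mirror.
  apply: (wlog (S \o mirror) (mirror c) (mirror d) (mirror a) (mirror b));
    rewrite /= ?mirrorK ?ltrN2 ?concordant_mirror //.
  exact: monotone_triples_mirror.
move=> mS _ _ _ _ Sc Sd cd1 cd2 S1 S2 S3 S4.
apply: contra (no_concordant_quadruple mS Sc Sd cd1 cd2 S1 S2 S3 S4) => ind.
exact (concordant_quadruple mS S1 S2 S3 S4 ind c12).
Qed.

End Points.

Lemma increasing_cuts k N (a : 'I_k.+1 -> 'I_N) : {homo a : s t / s < t} ->
  exists r : nat -> nat,
    [/\ r 0 = 0, r k.+1 = N & forall s : 'I_k.+1, r s <= a s < r s.+1].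
Proof.
move=> a_incr; pose r t := if t is 0 then 0 else oapp (fun s => val (a s)) N (insub t).
exists r; split=> [||s]; first by [].
  by rewrite /r insubF ?ltnn.
apply/andP; split.
  by case: s => [[|t] lt] //; rewrite /r (valK (Ordinal lt)).
rewrite /r; case: insubP => [s' _ s's|]; last by rewrite ltn_ord.
by apply: a_incr; rewrite s's.
Qed.

Lemma cuts_mono (r : nat -> nat) K : (forall t, t < K -> r t < r t.+1) ->
  {in [pred t | t <= K] &, {homo r : s t / s <= t}}.
Proof.
move=> r_incr; apply: homo_leq_in => [//||s t sK tK u|t _]; first exact: leq_trans.
  by rewrite !inE in sK tK *; lia.
by rewrite inE => /r_incr/ltnW.
Qed.

Section Support.
Variables (m n : nat) (P : 'M[bool]_(m, n)).

Definition supp (p : point) := exists (i : 'I_m) (j : 'I_n), p = (i%:Z, j%:Z)%R /\ P i j.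

Lemma interval_minor_embedding k l (Q : 'M[bool]_(k.+1, l.+1))
    (a : 'I_k.+1 -> 'I_m) (b : 'I_l.+1 -> 'I_n) :
  {homo a : s t / s < t} -> {homo b : s t / s < t} ->
  (forall s t, Q s t -> P (a s) (b t)) -> interval_minor Q P.
Proof.
move=> /increasing_cuts[r [r0 rk ra]] /increasing_cuts[c [c0 cl cb]] QP.
exists r, c; split; last split.
- split=> // s lt_s; have /andP[] := ra (Ordinal lt_s); exact: leq_ltn_trans.
- split=> // t lt_t; have /andP[] := cb (Ordinal lt_t); exact: leq_ltn_trans.
- by move=> s t Qst; exists (a s), (b t); rewrite ra cb QP.
Qed.

Lemma interval_minor_pair k l (Q : 'M[bool]_(k, l)) i j i' j' :
  interval_minor Q P -> Q i j -> Q i' j' ->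
  exists x y x' y',
    [/\ P x y, P x' y', i < i' -> x < x', j < j' -> y < y' & j' < j -> y' < y].
Proof.
case=> r [c [[r0 rk /cuts_mono r_mono] [[c0 cl /cuts_mono c_mono] W]]] Qij Qij'.
have [x [y [/andP[x1 x2] /andP[y1 y2] Pxy]]] := W i j Qij.
have [x' [y' [/andP[x1' x2'] /andP[y1' y2'] Pxy']]] := W i' j' Qij'.
exists x, y, x', y'; split=> // lt.
- by have := r_mono i.+1 i'; rewrite !inE => /(_ (ltn_ord i) (ltnW (ltn_ord i')) lt); lia.
- by have := c_mono j.+1 j'; rewrite !inE => /(_ (ltn_ord j) (ltnW (ltn_ord j')) lt); lia.
- by have := c_mono j'.+1 j; rewrite !inE => /(_ (ltn_ord j') (ltnW (ltn_ord j)) lt); lia.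
Qed.

Lemma interval_minor_3x3 (Q : 'M[bool]_3) (i1 i2 i3 : 'I_m) (j1 j2 j3 : 'I_n) :
  i1 < i2 < i3 -> j1 < j2 < j3 ->
  (forall s t, Q s t -> P (tnth [tuple i1; i2; i3] s) (tnth [tuple j1; j2; j3] t)) ->
  interval_minor Q P.
Proof.
have homo3 T (x1 x2 x3 : 'I_T) : x1 < x2 < x3 -> {homo tnth [tuple x1; x2; x3] : s t / s < t}.
  by move=> lt [[|[|[|?]]] ?] [[|[|[|?]]] ?] //; rewrite !(tnth_nth x1) /=; lia.
by move=> /homo3 a_incr /homo3 b_incr; apply: interval_minor_embedding.
Qed.

Lemma monotone_triples_supp :
  avoids Q1 P -> avoids Q2 P -> avoids Q3 P -> avoids Q4 P -> monotone_triples supp.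
Proof.
move=> A1 A2 A3 A4 _ _ _ [i1 [j1 [-> P1]]] [i2 [j2 [-> P2]]] [i3 [j3 [-> P3]]] /=.
rewrite !ltz_nat !eqz_nat => lti neqj.
have [o|[o|[o|[o|[o|o]]]]] : j1 < j2 < j3 \/ j3 < j2 < j1 \/ j2 < j1 < j3 \/
    j3 < j1 < j2 \/ j1 < j3 < j2 \/ j2 < j3 < j1 by lia.
- by rewrite o.
- by rewrite o orbT.
- case: A1; apply: (interval_minor_3x3 lti o).
  by move=> [[|[|[|?]]] ?] [[|[|[|?]]] ?]; rewrite /Q1 /pattern mxE.
- case: A2; apply: (interval_minor_3x3 lti o).
  by move=> [[|[|[|?]]] ?] [[|[|[|?]]] ?]; rewrite /Q2 /pattern mxE.
- case: A3; apply: (interval_minor_3x3 lti o).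
  by move=> [[|[|[|?]]] ?] [[|[|[|?]]] ?]; rewrite /Q3 /pattern mxE.
- case: A4; apply: (interval_minor_3x3 lti o).
  by move=> [[|[|[|?]]] ?] [[|[|[|?]]] ?]; rewrite /Q4 /pattern mxE.
Qed.

Lemma concordant_pair_of_D2 : interval_minor D2 P ->
  exists a b, [/\ supp a, supp b, (a.1 < b.1)%R & (a.2 < b.2)%R].
Proof.
move=> D2P; have D2_00 : D2 ord0 ord0 by rewrite /D2 /pattern mxE.
have D2_11 : D2 ord_max ord_max by rewrite /D2 /pattern mxE.
have [x [y [x' [y' [Pxy Pxy' ltx lty _]]]]] := interval_minor_pair D2P D2_00 D2_11.
exists (x%:Z, y%:Z)%R, (x'%:Z, y'%:Z)%R; split; [by exists x, y | by exists x', y' | |].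
  by rewrite ltz_nat ltx.
by rewrite ltz_nat lty.
Qed.

Lemma discordant_pair_of_D2bar : interval_minor D2bar P ->
  exists c d, [/\ supp c, supp d, (c.1 < d.1)%R & (d.2 < c.2)%R].
Proof.
move=> D2P; have D2_01 : D2bar ord0 ord_max by rewrite /D2bar /pattern mxE.
have D2_10 : D2bar ord_max ord0 by rewrite /D2bar /pattern mxE.
have [x [y [x' [y' [Pxy Pxy' ltx _ lty]]]]] := interval_minor_pair D2P D2_01 D2_10.
exists (x%:Z, y%:Z)%R, (x'%:Z, y'%:Z)%R; split; [by exists x, y | by exists x', y' | |].
  by rewrite ltz_nat ltx.
by rewrite ltz_nat lty.
Qed.

Lemma independent_quadruple_of_matching A f :
  matching (fun i j => P i j) A f -> 3 < #|A| ->
  exists p1 p2 p3 p4,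
    [/\ supp p1, supp p2, supp p3, supp p4 & pairwise independent [:: p1; p2; p3; p4]].
Proof.
case=> injf Pf; rewrite cardE.
pose pt (i : 'I_m) : point := (i%:Z, if f i is Some j then (j : nat)%:Z else 0)%R.
have supp_pt i : i \in A -> supp (pt i).
  by move=> iA; have [j fi Pij] := Pf i iA; exists i, j; rewrite /pt fi.
have independent_pt i i' : i \in A -> i' \in A -> i != i' -> independent (pt i) (pt i').
  move=> iA i'A neq; have [j fi _] := Pf i iA; have [j' fi' _] := Pf i' i'A.
  rewrite /independent /pt fi fi' /= !eqz_nat val_eqE neq /= val_eqE.
  by apply: contra neq => /eqP ejj; apply/eqP/injf; rewrite // fi fi' ejj.
have := enum_uniq A; have memA i : i \in enum A -> i \in A by rewrite mem_enum.
case: (enum A) memA => [|i1 [|i2 [|i3 [|i4 s]]]] // memA.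
rewrite /= !inE !negb_or => /and4P[/and4P[n12 n13 n14 _] /and3P[n23 n24 _] /andP[n34 _] _] _.
have mem k : k \in [:: i1, i2, i3, i4 & s] -> k \in A := memA k.
exists (pt i1), (pt i2), (pt i3), (pt i4).
split; try by apply/supp_pt/mem; rewrite !inE eqxx ?orbT.
by rewrite /= !independent_pt ?mem // !inE eqxx ?orbT.
Qed.

End Support.

Theorem proposition3p6 (m n : nat) (P : 'M[bool]_(m, n)) :
  avoids Q1 P -> avoids Q2 P -> avoids Q3 P -> avoids Q4 P ->
  avoids D2 P \/ avoids D2bar P \/ covered_by_lines P 3.
Proof.
move=> A1 A2 A3 A4; have mS := monotone_triples_supp A1 A2 A3 A4.
case: (classic (avoids D2 P)) => [|/NNPP]; first by left.
move=> /concordant_pair_of_D2[a [b [Sa Sb ab1 ab2]]].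
case: (classic (avoids D2bar P)) => [|/NNPP]; first by right; left.
move=> /discordant_pair_of_D2bar[c [d [Sc Sd cd1 cd2]]].
right; right; apply: konig => A f mf; rewrite leqNgt; apply/negP.
move=> /(independent_quadruple_of_matching mf)[p1 [p2 [p3 [p4 [S1 S2 S3 S4]]]]].
exact/negP/(no_independent_quadruple mS Sa Sb ab1 ab2 Sc Sd cd1 cd2 S1 S2 S3 S4).
Qed.
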